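(* Let $C$ be a parity complex. For all $M,P\subseteq C$ and $x\in C$, if $x^+$ moves $M$ to $P$ and $M$ is receptive, then $x^-$ moves $M$ to $P$.
   Context: A parity complex consists of a set $C=\bigsqcup_{n\ge 0}C_n$ graded by dimension, together with, for each $n\ge 0$ and each $x\in C_{n+1}$, two disjoint, non-empty, finite subsets $x^-,x^+\subseteq C_n$ (for $x\in C_0$ put $x^-=x^+=\emptyset$), subject to Axioms 1, 2, 3A, 3B below. Notation: for $S\subseteq C$, $S^-=\bigcup_{w\in S}w^-$, $S^+=\bigcup_{w\in S}w^+$, $S^\mp=S^-\setminus S^+$, $S^\pm=S^+\setminus S^-$; $x^{-+}=(x^-)^+$, etc. For $S,T\subseteq C$ write $S\perp T$ when $S^-\cap T^-=\emptyset$ and $S^+\cap T^+=\emptyset$; $x\perp y$ means $\{x\}\perp\{y\}$. With $S_n=S\cap C_n$, a set $S$ is well-formed when $S_0$ has at most one element and for every $n>0$ and all distinct $x,y\in S_n$, $x\perp y$. Write $x<y$ when $x^+\cap y^-\neq\emptyset$, and let $\lhd$ be the reflexive transitive closure of $<$. Axioms: (1) for all $x$, $x^{++}\cup x^{--}=x^{-+}\cup x^{+-}$; (2) for all $x$, $x^-$ and $x^+$ are well-formed; (3A) $x\lhd y$ and $y\lhd x$ imply $x=y$; (3B) if $x\lhd y$ then there is no $z$ with $x\in z^+$ and $y\in z^-$, and no $z$ with $y\in z^+$ and $x\in z^-$. For $S,M,P\subseteq C$, $S$ moves $M$ to $P$ when $M=(P\cup S^-)\setminus S^+$ and $P=(M\cup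 S^+)\setminus S^-$. A set $S\subseteq C$ is receptive when for all $x\in C$: if $x^{-+}\cap x^{++}\subseteq S$ and $S\cap x^{--}=\emptyset$ then $S\cap x^{+-}=\emptyset$; and if $x^{+-}\cap x^{--}\subseteq S$ and $S\cap x^{++}=\emptyset$ then $S\cap x^{-+}=\emptyset$. *)

From Stdlib Require Import List Relations.

Set Implicit Arguments.

Definition pset (T : Type) := T -> Prop.

Section ParityComplex.
Variable T : Type.
(* dim x = n  means  x ∈ C_n ;  mi x y  means  y ∈ x^- ;  pl x y  means  y ∈ x^+ *)
Variable dim : T -> nat.
Variable mi pl : T -> T -> Prop.

Definition seteq (A B : pset T) : Prop := forall y, A y <-> B y.
Definition setU (A B : pset T) : pset T := fun y => A y \/ B y.
Definition setD (A B : pset T) : pset T := fun y => A y /\ ~ B y.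
Definition setI (A B : pset T) : pset T := fun y => A y /\ B y.
Definition subset (A B : pset T) : Prop := forall y, A y -> B y.
Definition disjointP (A B : pset T) : Prop := forall y, A y -> B y -> False.
Definition finiteP (A : pset T) : Prop := exists l : list T, forall y, A y -> In y l.

Definition xm (x : T) : pset T := mi x.
Definition xp (x : T) : pset T := pl x.

Definition Sm (S : pset T) : pset T := fun y => exists w, S w /\ mi w y.
Definition Sp (S : pset T) : pset T := fun y => exists w, S w /\ pl w y.
Definition Smp (S : pset T) : pset T := setD (Sm S) (Sp S).
Definition Spm (S : pset T) : pset T := setD (Sp S) (Sm S).

Definition perp (S U : pset T) : Prop :=
  disjointP (Sm S) (Sm U) /\ disjointP (Sp S) (Sp U).
Definition perp1 (x y : T) : Prop := perp (eq x) (eq y).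

Definition layer (S : pset T) (n : nat) : pset T := fun y => S y /\ dim y = n.

Definition well_formed (S : pset T) : Prop :=
  (forall a b, layer S 0 a -> layer S 0 b -> a = b) /\
  (forall n, 0 < n -> forall a b, layer S n a -> layer S n b -> a <> b -> perp1 a b).

Definition ltp (x y : T) : Prop := exists z, pl x z /\ mi y z.
Definition lhd : T -> T -> Prop := clos_refl_trans T ltp.

Record is_parity_complex : Prop := {
  pc_grading : forall x y, (mi x y \/ pl x y) -> dim x = S (dim y);
  pc_disjoint : forall x, disjointP (xm x) (xp x);
  pc_nonempty_m : forall x, 0 < dim x -> exists y, mi x y;
  pc_nonempty_p : forall x, 0 < dim x -> exists y, pl x y;
  pc_finite_m : forall x, finiteP (xm x);
  pc_finite_p : forall x, finiteP (xp x);
  pc_ax1 : forall x, seteq (setU (Sp (xp x)) (Sm (xm x)))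
                           (setU (Sp (xm x)) (Sm (xp x)));
  pc_ax2m : forall x, well_formed (xm x);
  pc_ax2p : forall x, well_formed (xp x);
  pc_ax3A : forall x y, lhd x y -> lhd y x -> x = y;
  pc_ax3B : forall x y, lhd x y ->
      (~ exists z, pl z x /\ mi z y) /\ (~ exists z, pl z y /\ mi z x)
}.
(* Note: pc_grading forces dim-0 elements to have empty x^- and x^+,
   and for x ∈ C_{n+1}, x^-, x^+ ⊆ C_n. *)

Definition moves (S M P : pset T) : Prop :=
  seteq M (setD (setU P (Sm S)) (Sp S)) /\
  seteq P (setD (setU M (Sp S)) (Sm S)).

Definition receptive (S : pset T) : Prop :=
  forall x,
    (subset (setI (Sp (xm x)) (Sp (xp x))) S ->
       (forall y, S y -> ~ Sm (xm x) y) ->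
       forall y, S y -> ~ Sm (xp x) y) /\
    (subset (setI (Sm (xp x)) (Sm (xm x))) S ->
       (forall y, S y -> ~ Sp (xp x) y) ->
       forall y, S y -> ~ Sp (xm x) y).

End ParityComplex.

(* Write A, B, C, D for x^{++}, x^{+-}, x^{-+}, x^{--}.  Axiom 3B makes A, D
   and B, C disjoint, and Axiom 1 says A ∪ D = C ∪ B.  Since x^+ moves M to P,
   M misses A and contains B ∩ D, so receptivity of M forces M to miss C as
   well.  Under these constraints the two "moves" equations for (A, B) are
   equivalent, pointwise and by propositional reasoning, to those for (C, D). *)
From Stdlib Require Import Relations.

Set Implicit Arguments.
Unset Strict Implicit.

Section ParityComplex.

Variables (T : Type) (dim : T -> nat) (mi pl : T -> T -> Prop).

Lemma moves_exchange (A B C D M P : pset T) :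
  disjointP A D -> disjointP B C -> seteq (setU A D) (setU C B) ->
  disjointP M C ->
  seteq M (setD (setU P B) A) -> seteq P (setD (setU M A) B) ->
  seteq M (setD (setU P D) C) /\ seteq P (setD (setU M C) D).
Proof.
  unfold disjointP, seteq, setD, setU.
  intros AD BC AD_CB MC HM HP; split; intro y;
    specialize (AD y); specialize (BC y); specialize (AD_CB y);
    specialize (MC y); specialize (HM y); specialize (HP y); tauto.
Qed.

Hypothesis HC : is_parity_complex dim mi pl.

Lemma plus_plus_disjoint_minus_minus (x : T) :
  disjointP (Sp pl (xp pl x)) (Sm mi (xm mi x)).
Proof.
  intros y [z [xz zy]] [w [xw wy]].
  assert (zw : lhd mi pl z w) by (apply rt_step; exists y; auto).
  apply (proj1 (pc_ax3B HC zw)); exists x; auto.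
Qed.

Lemma plus_minus_disjoint_minus_plus (x : T) :
  disjointP (Sm mi (xp pl x)) (Sp pl (xm mi x)).
Proof.
  intros y [z [xz zy]] [w [xw wy]].
  assert (wz : lhd mi pl w z) by (apply rt_step; exists y; auto).
  apply (proj2 (pc_ax3B HC wz)); exists x; auto.
Qed.

Lemma moves_disjoint_plus (S M P : pset T) :
  moves mi pl S M P -> disjointP M (Sp pl S).
Proof. intros [HM _] y My; apply (proj1 (HM y) My). Qed.

Lemma moves_minus_sub (S M P : pset T) :
  moves mi pl S M P -> subset (setD (Sm mi S) (Sp pl S)) M.
Proof. intros [HM _] y [Sy nSy]; apply (proj2 (HM y)); split; [right|]; auto. Qed.

Lemma receptive_disjoint_minus_plus (x : T) (M P : pset T) :
  moves mi pl (xp pl x) M P -> receptive mi pl M ->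
  disjointP M (Sp pl (xm mi x)).
Proof.
  intros Hmv Hrec y My.
  apply (proj2 (Hrec x)); auto.
  - intros z [Bz Dz]; apply (moves_minus_sub Hmv); split; auto.
    intro Az; exact (plus_plus_disjoint_minus_minus Az Dz).
  - intros z Mz; exact (moves_disjoint_plus Hmv Mz).
Qed.

End ParityComplex.

Theorem lemma3p1 (T : Type) (dim : T -> nat) (mi pl : T -> T -> Prop)
  (HC : is_parity_complex dim mi pl)
  (M P : pset T) (x : T) :
  moves mi pl (xp pl x) M P -> receptive mi pl M ->
  moves mi pl (xm mi x) M P.
Proof.
  intros Hmv Hrec.
  pose proof (receptive_disjoint_minus_plus HC Hmv Hrec) as MC.
  destruct Hmv as [HM HP].
  apply moves_exchange with (A := Sp pl (xp pl x)) (B := Sm mi (xp pl x)); auto.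
  - exact (plus_plus_disjoint_minus_minus HC (x := x)).
  - exact (plus_minus_disjoint_minus_plus HC (x := x)).
  - exact (pc_ax1 HC x).
Qed.
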